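(* Let $a>0$, $b>2$ with $r:=a+b/2>4$, and let $u_+=1/2+(1/4-1/r)^{1/2}$. Let $(u(t),v(t))$ solve $$u'=(au^2+(b/2)v^2)(1-u)-u,\qquad v'=(av^2+(b/2)u^2)(1-v)-v,$$ with $u(0)=1$, $v(0)=0$. Then $\lim_{t\to\infty}u(t)=\lim_{t\to\infty}v(t)=u_+$. *)

From Stdlib Require Import Reals.
Open Scope R_scope.

Definition cv_at_infty (f : R -> R) (l : R) : Prop :=
  forall eps : R, 0 < eps -> exists T : R, forall t : R, T <= t -> Rabs (f t - l) < eps.

(* The region 0 < v < u < 1 < u + v is forward invariant: on three of its edges the vector
   field points strictly inwards, and the diagonal u = v is itself invariant, which a Gronwall
   estimate on u - v takes care of.  The trajectory enters the region at once from its corner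
   (1, 0).  Inside it, v <= u gives u' <= F(u) and v' >= F(v) for the diagonal field
   F(x) = r x^2 (1 - x) - x = r x (x - u_-) (u_+ - x).  Hence u is eventually below u_+ + eps,
   while v, once a crude bound has pushed it above the midpoint of u_- and 1/2, is eventually
   above u_+ - eps; as v < u, both tend to u_+. *)

From Stdlib Require Import Reals Lra Psatz Classical.
Open Scope R_scope.

Definition right_near (a : R) (P : R -> Prop) : Prop :=
  exists d, 0 < d /\ forall t, a <= t < a + d -> P t.

Lemma right_near_and (a : R) (P Q : R -> Prop) :
  right_near a P -> right_near a Q -> right_near a (fun t => P t /\ Q t).
Proof.
  intros [d1 [Hd1 HP]] [d2 [Hd2 HQ]]. exists (Rmin d1 d2).
  split; [now apply Rmin_glb_lt|].
  intros t Ht. pose proof (Rmin_l d1 d2). pose proof (Rmin_r d1 d2).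
  split; [apply HP|apply HQ]; lra.
Qed.

Lemma limit1_in_right (f : R -> R) (a l : R) :
  limit1_in f (fun t => a <= t) l a ->
  forall e, 0 < e -> right_near a (fun t => Rabs (f t - l) < e).
Proof.
  intros Hf e He. destruct (Hf e He) as [d [Hd Hnear]].
  exists d; split; [exact Hd|]. intros t Ht.
  apply (Hnear t). split; [lra|]. simpl; unfold Rdist. rewrite Rabs_right; lra.
Qed.

Lemma continuity_pt_pos_near (f : R -> R) (x : R) :
  continuity_pt f x -> 0 < f x -> exists d, 0 < d /\ forall y, Rabs (y - x) < d -> 0 < f y.
Proof.
  intros Hf Hx. destruct (Hf (f x) Hx) as [d [Hd Hnear]].
  exists d; split; [exact Hd|]. intros y Hy.
  destruct (Req_dec y x) as [->|Hne]; [exact Hx|].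
  assert (Hfy : Rabs (f y - f x) < f x).
  { apply (Hnear y). split; [split; [exact I|congruence]|exact Hy]. }
  apply Rabs_def2 in Hfy. lra.
Qed.

Lemma continuity_pt_Rmin (f g : R -> R) (x : R) :
  continuity_pt f x -> continuity_pt g x -> continuity_pt (fun t => Rmin (f t) (g t)) x.
Proof.
  intros Hf Hg.
  apply (continuity_pt_locally_ext (fun t => (f t + g t - Rabs (f t - g t)) * / 2) _ 1);
    [lra| |].
  - intros y _. unfold Rmin, Rabs. destruct Rle_dec, Rcase_abs; lra.
  - apply (continuity_pt_mult _ (fun _ => / 2)); [|apply continuity_pt_const; intros ? ?; reflexivity].
    apply continuity_pt_minus; [apply continuity_pt_plus; assumption|].
    apply (continuity_pt_comp (fun t => f t - g t) Rabs).
    + apply continuity_pt_minus; assumption.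
    + apply Rcontinuity_abs.
Qed.

Lemma first_zero (f : R -> R) (a b : R) :
  a <= b -> (forall t, a <= t <= b -> continuity_pt f t) -> 0 < f a -> f b <= 0 ->
  exists tau, a < tau <= b /\ f tau = 0 /\ forall s, a <= s < tau -> 0 < f s.
Proof.
  intros Hab Hcont Ha Hb.
  set (E := fun x => a <= x <= b /\ forall s, a <= s <= x -> 0 < f s).
  assert (HEa : E a) by (split; [lra|intros s Hs; replace s with a by lra; exact Ha]).
  destruct (completeness E) as [tau [Hub Hlub]].
  { exists b. intros x Hx; apply Hx. }
  { exists a; exact HEa. }
  assert (Hat : a <= tau) by (apply Hub, HEa).
  assert (Htb : tau <= b) by (apply Hlub; intros x Hx; apply Hx).
  assert (Hbefore : forall s, a <= s < tau -> 0 < f s).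
  { intros s Hs. apply NNPP; intro Hneg.
    assert (Hbound : is_upper_bound E s).
    { intros x [_ Hx]. apply Rnot_lt_le; intro Hsx. apply Hneg, Hx. lra. }
    specialize (Hlub s Hbound). lra. }
  assert (Hle : f tau <= 0).
  { apply Rnot_lt_le; intro Hpos.
    destruct (Req_dec tau b) as [Heq|Hne]; [subst tau; lra|].
    destruct (continuity_pt_pos_near f tau (Hcont tau (conj Hat Htb)) Hpos) as [d [Hd Hnear]].
    set (x := tau + Rmin (d / 2) (b - tau)).
    assert (Hx : tau < x <= tau + d / 2).
    { unfold x. pose proof (Rmin_l (d / 2) (b - tau)).
      pose proof (Rmin_glb_lt (d / 2) (b - tau) 0 ltac:(lra) ltac:(lra)). lra. }
    assert (HEx : E x).
    { split; [split; [lra|unfold x; pose proof (Rmin_r (d / 2) (b - tau)); lra]|].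
      intros s Hs. destruct (Rlt_le_dec s tau); [apply Hbefore; lra|].
      apply Hnear, Rabs_def1; lra. }
    specialize (Hub x HEx). lra. }
  assert (Hge : 0 <= f tau).
  { apply Rnot_lt_le; intro Hneg.
    destruct (continuity_pt_pos_near (fun t => - f t) tau
                (continuity_pt_opp f tau (Hcont tau (conj Hat Htb))) ltac:(lra)) as [d [Hd Hnear]].
    destruct (Req_dec a tau) as [Heq|Hne]; [subst tau; lra|].
    set (s := tau - Rmin (d / 2) (tau - a)).
    assert (Hs : tau - d / 2 <= s < tau).
    { unfold s. pose proof (Rmin_l (d / 2) (tau - a)).
      pose proof (Rmin_glb_lt (d / 2) (tau - a) 0 ltac:(lra) ltac:(lra)). lra. }
    assert (Has : a <= s) by (unfold s; pose proof (Rmin_r (d / 2) (tau - a)); lra).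
    specialize (Hbefore s (conj Has (proj2 Hs))).
    specialize (Hnear s ltac:(apply Rabs_def1; lra)). lra. }
  exists tau. split; [split; [|exact Htb]|split; [lra|exact Hbefore]].
  destruct (Req_dec a tau) as [Heq|Hne]; [subst tau; lra|lra].
Qed.

Lemma deriv_le0_of_gt_on_left (f : R -> R) (a tau l : R) :
  a < tau -> derivable_pt_lim f tau l ->
  (forall s, a <= s < tau -> f tau < f s) -> l <= 0.
Proof.
  intros Hat Hd Hleft. apply Rnot_lt_le; intro Hl.
  destruct (Hd (l / 2) ltac:(lra)) as [[d Hdpos] Hquot]. simpl in Hquot.
  set (h := - Rmin (d / 2) ((tau - a) / 2)).
  assert (Hh : - (d / 2) <= h < 0 /\ a <= tau + h).
  { unfold h. pose proof (Rmin_l (d / 2) ((tau - a) / 2)). pose proof (Rmin_r (d / 2) ((tau - a) / 2)).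
    pose proof (Rmin_glb_lt (d / 2) ((tau - a) / 2) 0 ltac:(lra) ltac:(lra)). lra. }
  specialize (Hquot h ltac:(lra) ltac:(rewrite Rabs_left; lra)).
  specialize (Hleft (tau + h) ltac:(lra)).
  apply Rabs_def2 in Hquot.
  assert (Hq : (f (tau + h) - f tau) / h * h = f (tau + h) - f tau) by (field; lra).
  nra.
Qed.

Lemma mvt_lower_bound (f f' : R -> R) (a b k : R) :
  a < b -> (forall t, a <= t <= b -> derivable_pt_lim f t (f' t)) ->
  (forall t, a < t < b -> k <= f' t) -> k * (b - a) <= f b - f a.
Proof.
  intros Hab Hd Hk. destruct (MVT_cor2 f f' a b Hab Hd) as [t [Heq Ht]].
  rewrite Heq. specialize (Hk t Ht). nra.
Qed.

(* Only right continuity at [a] is available, so the interval is shrunk to [s, b] and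
   [s] is let tend to [a]. *)
Lemma mvt_lower_bound_right (f f' : R -> R) (a b k : R) :
  a < b -> limit1_in f (fun t => a <= t) (f a) a ->
  (forall t, a < t <= b -> derivable_pt_lim f t (f' t)) ->
  (forall t, a < t < b -> k <= f' t) -> k * (b - a) <= f b - f a.
Proof.
  intros Hab Hlim Hd Hk. apply Rnot_lt_le; intro Hgap.
  set (e := k * (b - a) - (f b - f a)).
  destruct (limit1_in_right f a (f a) Hlim (e / 2) ltac:(unfold e; lra)) as [d [Hd0 Hnear]].
  set (s := a + Rmin (b - a) (Rmin d (e / (2 * (Rabs k + 1)))) / 2).
  assert (Hw : 0 < Rmin (b - a) (Rmin d (e / (2 * (Rabs k + 1))))).
  { pose proof (Rabs_pos k).
    repeat apply Rmin_glb_lt; try lra. apply Rdiv_lt_0_compat; unfold e; lra. }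
  assert (Hs : a < s < b /\ s < a + d).
  { unfold s. pose proof (Rmin_l (b - a) (Rmin d (e / (2 * (Rabs k + 1))))).
    pose proof (Rmin_r (b - a) (Rmin d (e / (2 * (Rabs k + 1))))).
    pose proof (Rmin_l d (e / (2 * (Rabs k + 1)))). lra. }
  assert (Hks : k * (s - a) < e / 2).
  { assert (Hsa : s - a < e / (2 * (Rabs k + 1))).
    { unfold s. pose proof (Rmin_r (b - a) (Rmin d (e / (2 * (Rabs k + 1))))).
      pose proof (Rmin_r d (e / (2 * (Rabs k + 1)))). lra. }
    pose proof (Rabs_pos k). pose proof (Rle_abs k).
    assert (E : e / (2 * (Rabs k + 1)) * (2 * (Rabs k + 1)) = e) by (field; lra).
    nra. }
  assert (Hsb := mvt_lower_bound f f' s b k ltac:(lra) (fun t Ht => Hd t ltac:(lra))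
                   (fun t Ht => Hk t ltac:(lra))).
  specialize (Hnear s ltac:(lra)). apply Rabs_def2 in Hnear.
  unfold e in *. lra.
Qed.

Lemma pos_of_deriv_ge_linear (f f' : R -> R) (a b K : R) :
  a < b -> (forall t, a <= t <= b -> derivable_pt_lim f t (f' t)) ->
  (forall t, a < t < b -> - K * f t <= f' t) -> 0 < f a -> 0 < f b.
Proof.
  intros Hab Hd Hk Ha.
  set (w := fun t => exp (K * t)).
  assert (Hw : forall t, derivable_pt_lim w t (exp (K * t) * (K * 1))).
  { intro t. apply (derivable_pt_lim_comp (fun s => K * s) exp t (K * 1)).
    - exact (derivable_pt_lim_scal id K t 1 (derivable_pt_lim_id t)).
    - apply derivable_pt_lim_exp. }
  assert (Hmono := mvt_lower_bound (fun t => f t * w t) _ a b 0 Hab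
    (fun t Ht => derivable_pt_lim_mult f w t _ _ (Hd t Ht) (Hw t))).
  assert (Hwa : 0 < w a) by apply exp_pos. assert (Hwb : 0 < w b) by apply exp_pos.
  assert (Hgrow : 0 * (b - a) <= f b * w b - f a * w a).
  { apply Hmono. intros t Ht. specialize (Hk t Ht). unfold w. pose proof (exp_pos (K * t)). nra. }
  nra.
Qed.

Lemma level_barrier (f f' : R -> R) (t1 L : R) :
  (forall t, t1 <= t -> derivable_pt_lim f t (f' t)) -> L < f t1 ->
  (forall t, t1 <= t -> f t = L -> 0 < f' t) -> forall t, t1 <= t -> L < f t.
Proof.
  intros Hd H1 Hcross t Ht. apply Rnot_le_lt; intro Hbelow.
  assert (Hcont : forall s, t1 <= s <= t -> continuity_pt (fun s => f s - L) s).
  { intros s Hs. apply (continuity_pt_minus f (fun _ => L)).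
    - apply derivable_continuous_pt. exists (f' s). exact (Hd s (proj1 Hs)).
    - apply continuity_pt_const. intros ? ?; reflexivity. }
  destruct (first_zero (fun s => f s - L) t1 t Ht Hcont ltac:(lra) ltac:(lra))
    as [tau [Htau [Hzero Hbefore]]].
  assert (Hl := deriv_le0_of_gt_on_left f t1 tau (f' tau) (proj1 Htau) (Hd tau ltac:(lra))
                  (fun s Hs => ltac:(specialize (Hbefore s Hs); lra))).
  specialize (Hcross tau ltac:(lra) ltac:(lra)). lra.
Qed.

Lemma eventually_lt_of_deriv_le_neg (f f' : R -> R) (t1 B L k : R) :
  0 < k -> (forall t, t1 <= t -> derivable_pt_lim f t (f' t)) ->
  (forall t, t1 <= t -> B <= f t) ->
  (forall t, t1 <= t -> L <= f t -> f' t <= - k) ->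
  exists T, t1 <= T /\ forall t, T <= t -> f t < L.
Proof.
  intros Hk Hd HB Hdec.
  assert (Hd' : forall t, t1 <= t -> derivable_pt_lim (fun s => - f s) t (- f' t))
    by (intros t Ht; apply derivable_pt_lim_opp, Hd, Ht).
  assert (Hreach : exists T, t1 <= T /\ f T < L).
  { apply NNPP; intro Hnever.
    assert (Habove : forall t, t1 <= t -> L <= f t).
    { intros t Ht. apply Rnot_lt_le; intro Hlt. apply Hnever. exists t; split; assumption. }
    set (t := t1 + (Rabs (f t1 - B) + 1) / k).
    assert (Hkt : k * (t - t1) = Rabs (f t1 - B) + 1) by (unfold t; field; lra).
    assert (Ht1 : t1 < t) by (pose proof (Rabs_pos (f t1 - B)); nra).
    assert (Hdrop := mvt_lower_bound (fun s => - f s) (fun s => - f' s) t1 t k Ht1 (fun s Hs => Hd' s (proj1 Hs))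
      (fun s Hs => ltac:(specialize (Hdec s ltac:(lra) (Habove s ltac:(lra))); lra))).
    pose proof (Rle_abs (f t1 - B)). specialize (HB t ltac:(nra)). lra. }
  destruct Hreach as [T [HT HfT]]. exists T; split; [exact HT|]. intros t Ht.
  assert (Hstay := level_barrier (fun s => - f s) (fun s => - f' s) T (- L)
    (fun s Hs => Hd' s ltac:(lra)) ltac:(lra)
    (fun s Hs Heq => ltac:(specialize (Hdec s ltac:(lra) ltac:(lra)); lra)) t Ht).
  lra.
Qed.

(* The system reads [u' = rate a c u v], [v' = rate a c v u] with [c = b / 2]. *)
Definition rate (a c x y : R) : R := (a * x ^ 2 + c * y ^ 2) * (1 - x) - x.

Definition root_lo (r : R) : R := 1 / 2 - sqrt (1 / 4 - 1 / r).
Definition root_hi (r : R) : R := 1 / 2 + sqrt (1 / 4 - 1 / r).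

Definition in_region (x y : R) : Prop := 0 < y /\ y < x /\ x < 1 /\ 1 < x + y.

Lemma limit_rate (a c : R) (x y : R -> R) (D : R -> Prop) (x0 y0 t0 : R) :
  limit1_in x D x0 t0 -> limit1_in y D y0 t0 ->
  limit1_in (fun t => rate a c (x t) (y t)) D (rate a c x0 y0) t0.
Proof.
  intros Hx Hy.
  assert (Hcst : forall k, limit1_in (fun _ => k) D k t0)
    by (intro k; exact (limit_free (fun _ => k) D k t0)).
  assert (Hsq : forall f l, limit1_in f D l t0 -> limit1_in (fun t => f t ^ 2) D (l ^ 2) t0).
  { intros f l Hf. replace (l ^ 2) with (l * l) by ring.
    apply (limit1_ext (fun t => f t * f t)); [intros; ring|now apply limit_mul]. }
  unfold rate. apply limit_minus; [|exact Hx].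
  apply limit_mul; [apply limit_plus; apply limit_mul; auto|apply limit_minus; auto].
Qed.

Lemma rate_le_of_sq_le (a c x y y' : R) :
  0 <= c -> x <= 1 -> y ^ 2 <= y' ^ 2 -> rate a c x y <= rate a c x y'.
Proof.
  intros Hc Hx Hy. unfold rate.
  assert (0 <= c * (y' ^ 2 - y ^ 2) * (1 - x)) by (apply Rmult_le_pos; nra).
  nra.
Qed.

Lemma roots_spec (r : R) : 4 < r ->
  0 < root_lo r < 1 / 2 /\ 1 / 2 < root_hi r < 1 /\
  root_lo r + root_hi r = 1 /\ r * root_lo r * root_hi r = 1.
Proof.
  intro Hr. unfold root_lo, root_hi.
  assert (Hinv : 0 < 1 / r < 1 / 4).
  { split; [apply Rdiv_lt_0_compat; lra|].
    apply Rmult_lt_reg_r with (4 * r); [lra|]. field_simplify; lra. }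
  remember (1 / 4 - 1 / r) as d eqn:Hdef.
  assert (Hd : 0 < d) by lra.
  assert (Hsq : sqrt d * sqrt d = d) by (apply sqrt_sqrt; lra).
  assert (Hpos : 0 < sqrt d) by (apply sqrt_lt_R0; exact Hd).
  assert (Hlt : sqrt d < 1 / 2) by nra.
  split; [lra|split; [lra|split; [lra|]]].
  transitivity (r * (1 / 4 - sqrt d * sqrt d)); [field|].
  rewrite Hsq, Hdef. field. lra.
Qed.

Lemma rate_diag (a c x : R) : 4 < a + c ->
  rate a c x x = (a + c) * x * (x - root_lo (a + c)) * (root_hi (a + c) - x).
Proof.
  intro Hr. destruct (roots_spec (a + c) Hr) as [_ [_ [Hsum Hprod]]].
  unfold rate.
  replace ((a + c) * x * (x - root_lo (a + c)) * (root_hi (a + c) - x))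
    with ((a + c) * x ^ 2 * (root_lo (a + c) + root_hi (a + c)) - (a + c) * x ^ 3
          - x * ((a + c) * root_lo (a + c) * root_hi (a + c))) by ring.
  rewrite Hsum, Hprod. ring.
Qed.

Lemma rate_diag_ge (a c l e x : R) : 4 < a + c -> root_lo (a + c) <= l ->
  l <= x <= root_hi (a + c) - e -> 0 <= e ->
  (a + c) * l * (l - root_lo (a + c)) * e <= rate a c x x.
Proof.
  intros Hr Hl Hx He. rewrite (rate_diag a c x Hr).
  destruct (roots_spec (a + c) Hr) as [Hlo _].
  set (lo := root_lo (a + c)) in *.
  assert (Hlx : l * (l - lo) <= x * (x - lo)) by (apply Rmult_le_compat; lra).
  assert (0 <= (a + c) * (l * (l - lo))) by (apply Rmult_le_pos; nra).
  assert ((a + c) * (l * (l - lo)) <= (a + c) * (x * (x - lo)))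
    by (apply Rmult_le_compat_l; lra).
  assert ((a + c) * (l * (l - lo)) * e <= (a + c) * (x * (x - lo)) * (root_hi (a + c) - x))
    by (apply Rmult_le_compat; lra).
  nra.
Qed.

Lemma rate_diag_le (a c e x : R) : 4 < a + c -> 0 <= e -> root_hi (a + c) + e <= x ->
  rate a c x x <= - ((a + c) * root_hi (a + c) * (root_hi (a + c) - root_lo (a + c)) * e).
Proof.
  intros Hr He Hx. rewrite (rate_diag a c x Hr).
  destruct (roots_spec (a + c) Hr) as [Hlo [Hhi _]].
  set (lo := root_lo (a + c)) in *. set (hi := root_hi (a + c)) in *.
  assert (Hhx : hi * (hi - lo) <= x * (x - lo)) by (apply Rmult_le_compat; lra).
  assert (0 <= (a + c) * (hi * (hi - lo))) by (apply Rmult_le_pos; nra).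
  assert ((a + c) * (hi * (hi - lo)) <= (a + c) * (x * (x - lo)))
    by (apply Rmult_le_compat_l; lra).
  assert ((a + c) * (hi * (hi - lo)) * e <= (a + c) * (x * (x - lo)) * (x - hi))
    by (apply Rmult_le_compat; lra).
  nra.
Qed.

Lemma rate_sub_ge (a c x y : R) : 0 < a -> 1 < c -> 0 <= y <= x -> x <= 1 ->
  - (3 * a + 2 * c + 1) * (x - y) <= rate a c x y - rate a c y x.
Proof.
  intros Ha Hc Hy Hx.
  set (g := (a - c) * (x + y) - a * (x ^ 2 + x * y + y ^ 2) + c * x * y - 1).
  replace (rate a c x y - rate a c y x) with ((x - y) * g) by (unfold rate, g; ring).
  assert (- (3 * a + 2 * c + 1) <= g).
  { unfold g. assert (0 <= x * y) by nra. assert (x ^ 2 + x * y + y ^ 2 <= 3) by nra. nra. }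
  nra.
Qed.

Lemma rate_sum_pos_on_antidiag (a c x y : R) : 0 < a -> 1 < c -> 4 < a + c ->
  x + y = 1 -> 0 <= y <= x -> 0 < rate a c x y + rate a c y x.
Proof.
  intros Ha Hc Hr Hs Hy. replace y with (1 - x) by lra.
  set (p := x * (1 - x)).
  assert (0 <= p <= 1 / 4) by (unfold p; nra).
  replace (rate a c x (1 - x) + rate a c (1 - x) x)
    with ((c - 1) * (1 - 4 * p) + (a + c - 4) * p) by (unfold rate, p; ring).
  destruct (Req_dec p 0) as [->|Hp]; nra.
Qed.

Lemma rate_ge_half_gap (a c x y : R) : 0 < a -> 1 < c -> 4 < a + c ->
  0 <= y <= 1 / 2 -> 1 <= x + y -> x <= 1 -> (1 - 2 * y) / 2 <= rate a c y x.
Proof.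
  intros Ha Hc Hr Hy Hs Hx.
  apply Rle_trans with (rate a c y (1 - y)); [|apply rate_le_of_sq_le; nra].
  assert (E : rate a c y (1 - y) - (1 - 2 * y) / 2
              = (a + c - 4) * (y ^ 2 * (1 - y)) + (c - 1) * ((1 - y) * (1 - 2 * y))
                + (1 - 2 * y) * ((1 - y) ^ 2 + y ^ 2 - 1 / 2)) by (unfold rate; field).
  assert (0 <= y ^ 2 * (1 - y)) by nra.
  assert (0 <= (1 - y) * (1 - 2 * y)) by nra.
  assert (0 <= (1 - 2 * y) * ((1 - y) ^ 2 + y ^ 2 - 1 / 2)) by (apply Rmult_le_pos; nra).
  nra.
Qed.

Definition region_gap (x y : R) : R := Rmin (Rmin y (x - y)) (Rmin (1 - x) (x + y - 1)).

Lemma region_gap_pos (x y : R) : 0 < region_gap x y <-> in_region x y.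
Proof.
  unfold region_gap, in_region, Rmin.
  split; intros; repeat destruct Rle_dec; lra.
Qed.

Lemma region_gap_zero (x y : R) : region_gap x y = 0 ->
  0 <= y <= x /\ x <= 1 /\ 1 <= x + y /\ (y = 0 \/ x = y \/ x = 1 \/ x + y = 1).
Proof. unfold region_gap, Rmin. repeat destruct Rle_dec; lra. Qed.

Section Trajectory.

Variables (a c : R) (u v : R -> R).
Hypothesis ha : 0 < a.
Hypothesis hc : 1 < c.
Hypothesis hr : 4 < a + c.
Hypothesis hu' : forall t, 0 < t -> derivable_pt_lim u t (rate a c (u t) (v t)).
Hypothesis hv' : forall t, 0 < t -> derivable_pt_lim v t (rate a c (v t) (u t)).

Hypothesis hu0c : limit1_in u (fun t => 0 <= t) (u 0) 0.
Hypothesis hv0c : limit1_in v (fun t => 0 <= t) (v 0) 0.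
Hypothesis hu0 : u 0 = 1.
Hypothesis hv0 : v 0 = 0.

Lemma enters_region : exists t0, 0 < t0 /\ in_region (u t0) (v t0).
Proof.
  set (e := Rmin (1 / 2) ((c - 1) / 4)).
  assert (He : 0 < e /\ e <= 1 / 2 /\ e <= (c - 1) / 4).
  { unfold e. split; [apply Rmin_glb_lt; lra|split; [apply Rmin_l|apply Rmin_r]]. }
  assert (Hru : limit1_in (fun t => rate a c (u t) (v t)) (fun t => 0 <= t) (-1) 0).
  { pose proof (limit_rate a c u v _ _ _ 0 hu0c hv0c) as Hlim.
    rewrite hu0, hv0 in Hlim. now replace (rate a c 1 0) with (-1) in Hlim by (unfold rate; ring). }
  assert (Hrv : limit1_in (fun t => rate a c (v t) (u t)) (fun t => 0 <= t) c 0).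
  { pose proof (limit_rate a c v u _ _ _ 0 hv0c hu0c) as Hlim.
    rewrite hu0, hv0 in Hlim. now replace (rate a c 0 1) with c in Hlim by (unfold rate; ring). }
  destruct (right_near_and _ _ _
    (right_near_and _ _ _ (limit1_in_right _ _ _ hu0c e (proj1 He)) (limit1_in_right _ _ _ hv0c e (proj1 He)))
    (right_near_and _ _ _ (limit1_in_right _ _ _ Hru e (proj1 He)) (limit1_in_right _ _ _ Hrv e (proj1 He))))
    as [d [Hd Hnear]].
  assert (Hwin : forall t, 0 <= t < d -> 1 - e < u t /\ v t < e /\
            - 1 - e < rate a c (u t) (v t) < - 1 + e /\ c - e < rate a c (v t) (u t)).
  { intros t Ht. destruct (Hnear t ltac:(lra)) as [[Hu Hv] [Hru' Hrv']].
    rewrite hu0 in Hu. rewrite hv0 in Hv.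
    apply Rabs_def2 in Hu, Hv, Hru', Hrv'. lra. }
  set (t0 := d / 2).
  assert (Hu := mvt_lower_bound_right (fun t => - u t) (fun t => - rate a c (u t) (v t)) 0 t0 (1 / 2)
    ltac:(unfold t0; lra) (limit_Ropp _ _ _ _ hu0c)
    (fun t Ht => derivable_pt_lim_opp u t _ (hu' t ltac:(lra)))
    (fun t Ht => ltac:(specialize (Hwin t ltac:(unfold t0 in *; lra)); cbv beta; lra))).
  assert (Hv := mvt_lower_bound_right v (fun t => rate a c (v t) (u t)) 0 t0 (1 / 2)
    ltac:(unfold t0; lra) hv0c (fun t Ht => hv' t ltac:(lra))
    (fun t Ht => ltac:(specialize (Hwin t ltac:(unfold t0 in *; lra)); cbv beta; lra))).
  assert (Huv := mvt_lower_bound_right (fun t => u t + v t)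
    (fun t => rate a c (u t) (v t) + rate a c (v t) (u t)) 0 t0 ((c - 1) / 2)
    ltac:(unfold t0; lra) (limit_plus _ _ _ _ _ _ hu0c hv0c)
    (fun t Ht => derivable_pt_lim_plus u v t _ _ (hu' t ltac:(lra)) (hv' t ltac:(lra)))
    (fun t Ht => ltac:(specialize (Hwin t ltac:(unfold t0 in *; lra)); cbv beta; lra))).
  exists t0. specialize (Hwin t0 ltac:(unfold t0; lra)).
  cbv beta in Hu, Huv. rewrite hu0, hv0 in *. unfold in_region, t0 in *. nra.
Qed.

Lemma region_gap_continuous (s : R) : 0 < s -> continuity_pt (fun s => region_gap (u s) (v s)) s.
Proof.
  intro Hs.
  assert (Hcu : continuity_pt u s)
    by (apply derivable_continuous_pt; exists (rate a c (u s) (v s)); exact (hu' s Hs)).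
  assert (Hcv : continuity_pt v s)
    by (apply derivable_continuous_pt; exists (rate a c (v s) (u s)); exact (hv' s Hs)).
  assert (Hc1 : continuity_pt (fun _ => 1) s)
    by (apply continuity_pt_const; intros ? ?; reflexivity).
  unfold region_gap. repeat apply continuity_pt_Rmin.
  - exact Hcv.
  - exact (continuity_pt_minus u v s Hcu Hcv).
  - exact (continuity_pt_minus _ u s Hc1 Hcu).
  - exact (continuity_pt_minus _ _ s (continuity_pt_plus u v s Hcu Hcv) Hc1).
Qed.

Lemma region_invariant (t0 : R) : 0 < t0 -> in_region (u t0) (v t0) ->
  forall t, t0 <= t -> in_region (u t) (v t).
Proof.
  intros Ht0 Hin t Ht. apply region_gap_pos, Rnot_le_lt; intro Hout.
  destruct (first_zero _ t0 t Ht (fun s Hs => region_gap_continuous s ltac:(lra))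
              (proj2 (region_gap_pos _ _) Hin) Hout) as [tau [Htau [Hzero Hbefore]]].
  assert (Hprev : forall s, t0 <= s < tau -> in_region (u s) (v s))
    by (intros s Hs; apply region_gap_pos, Hbefore, Hs).
  assert (Htau0 : 0 < tau) by lra.
  destruct (region_gap_zero _ _ Hzero) as [Hvu [Hu1 [Hs1 [Hv0|[Heq|[Hu|Hs]]]]]].
  - assert (Hl := deriv_le0_of_gt_on_left v t0 tau _ (proj1 Htau) (hv' tau Htau0)
                    (fun s Hs => ltac:(destruct (Hprev s Hs); lra))).
    rewrite Hv0 in Hl. unfold rate in Hl. nra.
  - assert (Hgap := pos_of_deriv_ge_linear (fun s => u s - v s)
      (fun s => rate a c (u s) (v s) - rate a c (v s) (u s)) t0 tau (3 * a + 2 * c + 1) (proj1 Htau)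
      (fun s Hs => derivable_pt_lim_minus u v s _ _ (hu' s ltac:(lra)) (hv' s ltac:(lra)))
      (fun s Hs => ltac:(destruct (Hprev s ltac:(lra)) as [? [? [? ?]]]; apply rate_sub_ge; lra))
      ltac:(destruct Hin as [? [? ?]]; lra)).
    lra.
  - assert (Hl := deriv_le0_of_gt_on_left (fun s => - u s) t0 tau _ (proj1 Htau)
                    (derivable_pt_lim_opp u tau _ (hu' tau Htau0))
                    (fun s Hs => ltac:(destruct (Hprev s Hs) as [? [? [? ?]]]; lra))).
    rewrite Hu in Hl. unfold rate in Hl. lra.
  - assert (Hl := deriv_le0_of_gt_on_left (fun s => u s + v s) t0 tau _ (proj1 Htau)
                    (derivable_pt_lim_plus u v tau _ _ (hu' tau Htau0) (hv' tau Htau0))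
                    (fun s Hs => ltac:(destruct (Hprev s Hs) as [? [? [? ?]]]; lra))).
    assert (Hpos := rate_sum_pos_on_antidiag a c (u tau) (v tau) ha hc hr Hs Hvu).
    lra.
Qed.

Section Convergence.

Variable t0 : R.
Hypothesis ht0 : 0 < t0.
Hypothesis hreg : forall t, t0 <= t -> in_region (u t) (v t).

Lemma u_eventually_below (eps : R) : 0 < eps ->
  exists T, forall t, T <= t -> u t < root_hi (a + c) + eps.
Proof.
  intro He. destruct (roots_spec _ hr) as [Hlo [Hhi _]].
  destruct (eventually_lt_of_deriv_le_neg u (fun t => rate a c (u t) (v t)) t0 0
    (root_hi (a + c) + eps) ((a + c) * root_hi (a + c) * (root_hi (a + c) - root_lo (a + c)) * eps))
    as [T [_ HT]]; [| |intros t Ht; destruct (hreg t Ht); lra| |now exists T].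
  - repeat apply Rmult_lt_0_compat; lra.
  - intros t Ht. apply hu'. lra.
  - intros t Ht Hut. destruct (hreg t Ht) as [? [? [? ?]]].
    apply Rle_trans with (rate a c (u t) (u t)); [apply rate_le_of_sq_le; nra|].
    apply rate_diag_le; lra.
Qed.

Lemma v_eventually_above_mid :
  exists T, t0 <= T /\ forall t, T <= t -> (root_lo (a + c) + 1 / 2) / 2 < v t.
Proof.
  destruct (roots_spec _ hr) as [Hlo _].
  destruct (eventually_lt_of_deriv_le_neg (fun t => - v t) (fun t => - rate a c (v t) (u t)) t0 (-1)
    (- ((root_lo (a + c) + 1 / 2) / 2)) ((1 / 2 - root_lo (a + c)) / 2))
    as [T [HT HvT]]; [lra| | |
      |exists T; split; [exact HT|intros t Ht; specialize (HvT t Ht); lra]].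
  - intros t Ht. apply derivable_pt_lim_opp, hv'. lra.
  - intros t Ht. destruct (hreg t Ht) as [? [? [? ?]]]. lra.
  - intros t Ht Hvt. destruct (hreg t Ht) as [? [? [? ?]]].
    assert (Hhalf := rate_ge_half_gap a c (u t) (v t) ha hc hr ltac:(lra) ltac:(lra) ltac:(lra)).
    lra.
Qed.

Lemma v_eventually_above (eps : R) : 0 < eps ->
  exists T, forall t, T <= t -> root_hi (a + c) - eps < v t.
Proof.
  intro He. destruct (roots_spec _ hr) as [Hlo [Hhi _]].
  destruct v_eventually_above_mid as [T0 [HT0 Hmid]].
  set (m := (root_lo (a + c) + 1 / 2) / 2) in Hmid.
  destruct (eventually_lt_of_deriv_le_neg (fun t => - v t) (fun t => - rate a c (v t) (u t)) T0 (-1)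
    (- (root_hi (a + c) - eps)) ((a + c) * m * (m - root_lo (a + c)) * eps))
    as [T [_ HvT]]; [unfold m; repeat apply Rmult_lt_0_compat; lra| | |
      |exists T; intros t Ht; specialize (HvT t Ht); lra].
  - intros t Ht. apply derivable_pt_lim_opp, hv'. lra.
  - intros t Ht. destruct (hreg t ltac:(lra)) as [? [? [? ?]]]. lra.
  - intros t Ht Hvt. destruct (hreg t ltac:(lra)) as [? [? [? ?]]]. specialize (Hmid t Ht).
    assert (Hdiag := rate_diag_ge a c m eps (v t) hr ltac:(unfold m; lra) ltac:(lra) ltac:(lra)).
    assert (rate a c (v t) (v t) <= rate a c (v t) (u t)) by (apply rate_le_of_sq_le; nra).
    lra.
Qed.

Lemma trajectory_limits : cv_at_infty u (root_hi (a + c)) /\ cv_at_infty v (root_hi (a + c)).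
Proof.
  enough (Hsqueeze : forall eps, 0 < eps -> exists T, forall t, T <= t ->
            root_hi (a + c) - eps < v t < u t /\ u t < root_hi (a + c) + eps).
  { split; intros eps He; destruct (Hsqueeze eps He) as [T HT]; exists T; intros t Ht;
      destruct (HT t Ht); apply Rabs_def1; lra. }
  intros eps He.
  destruct (u_eventually_below eps He) as [T1 H1]. destruct (v_eventually_above eps He) as [T2 H2].
  exists (Rmax t0 (Rmax T1 T2)). intros t Ht.
  pose proof (Rmax_l t0 (Rmax T1 T2)). pose proof (Rmax_r t0 (Rmax T1 T2)).
  pose proof (Rmax_l T1 T2). pose proof (Rmax_r T1 T2).
  destruct (hreg t ltac:(lra)) as [? [? _]].
  split; [split|]; [apply H2| |apply H1]; lra.
Qed.

End Convergence.

End Trajectory.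

Theorem lemma10p1 (a b : R) (u v : R -> R)
  (ha : 0 < a) (hb : 2 < b) (hr : 4 < a + b / 2)
  (hu' : forall t : R, 0 < t ->
     derivable_pt_lim u t ((a * (u t)^2 + (b/2) * (v t)^2) * (1 - u t) - u t))
  (hv' : forall t : R, 0 < t ->
     derivable_pt_lim v t ((a * (v t)^2 + (b/2) * (u t)^2) * (1 - v t) - v t))
  (hu0c : limit1_in u (fun t => 0 <= t) (u 0) 0)
  (hv0c : limit1_in v (fun t => 0 <= t) (v 0) 0)
  (hu0 : u 0 = 1) (hv0 : v 0 = 0) :
  cv_at_infty u (1/2 + sqrt (1/4 - 1 / (a + b / 2))) /\
  cv_at_infty v (1/2 + sqrt (1/4 - 1 / (a + b / 2))).
Proof.
  assert (hc : 1 < b / 2) by lra.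
  destruct (enters_region a (b / 2) u v hc hu' hv' hu0c hv0c hu0 hv0) as [t0 [Ht0 Hin]].
  exact (trajectory_limits a (b / 2) u v ha hc hr hu' hv' t0 Ht0
           (region_invariant a (b / 2) u v ha hc hr hu' hv' t0 Ht0 Hin)).
Qed.
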